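(* Let $f$ be a SAT formula and consider the tensor network of its Boolean state, in which each variable wire carries the tensor $\langle 0|+\langle 1|$, each variable occurring in $k$ clauses is copied by a degree-$k$ COPY-tensor $|0\rangle\langle 0|^{\otimes k}+|1\rangle\langle 1|^{\otimes k}$ wired to those clauses (a variable occurring in exactly one clause is wired directly), and each clause is a tensor vertex. Let $k$ be the treewidth of (the underlying graph of) this network and $c$ the number of COPY-tensors. Then $k\le c$.
   Context: The underlying graph of a tensor network has the tensors as vertices and the wires as edges. Treewidth is the usual graph-theoretic treewidth. *)

From mathcomp Require Import all_boot all_order.
Set Implicit Arguments. Unset Strict Implicit. Unset Printing Implicit Defensive.

(* A graph is given by a vertex set V : {set T} over a finType T and an
   adjacency relation E (only edges between vertices of V matter). *)

(* A (finite, nonempty) tree on the index set 'I_N.+1: irreflexive, symmetric,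
   connected, with exactly N (undirected) edges, i.e. 2*N ordered pairs. *)
Definition is_tree (N : nat) (t : rel 'I_N.+1) : Prop :=
  [/\ irreflexive t, symmetric t, (forall i j, connect t i j)
    & #|[set p : 'I_N.+1 * 'I_N.+1 | t p.1 p.2]| = 2 * N].

Definition tree_decomp (T : finType) (V : {set T}) (E : rel T)
    (N : nat) (t : rel 'I_N.+1) (B : 'I_N.+1 -> {set T}) : Prop :=
  [/\ is_tree t,
      (forall i, B i \subset V),
      (forall x, x \in V -> exists i, x \in B i),
      (forall x y, x \in V -> y \in V -> E x y -> exists i, (x \in B i) && (y \in B i))
    & (forall x i j, x \in B i -> x \in B j ->
         connect [rel a b | [&& t a b, x \in B a & x \in B b]] i j)].

Definition tw_width (T : finType) (N : nat) (B : 'I_N.+1 -> {set T}) : nat :=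
  (\max_(i : 'I_N.+1) #|B i|).-1.

Definition treewidth_le (T : finType) (V : {set T}) (E : rel T) (k : nat) : Prop :=
  exists N (t : rel 'I_N.+1) (B : 'I_N.+1 -> {set T}),
    tree_decomp V E t B /\ tw_width B <= k.

(* A CNF formula over variables 'I_n with m clauses; clause j is a list of
   literals (variable, polarity). *)
Definition literal (n : nat) := ('I_n * bool)%type.
Definition cnf (n m : nat) := 'I_m -> seq (literal n).

Section Network.
Variables (n m : nat) (f : cnf n m).

Definition occurs (v : 'I_n) (j : 'I_m) : bool :=
  has (fun l : literal n => l.1 == v) (f j).

Definition occ (v : 'I_n) : nat := #|[set j | occurs v j]|.

(* v gets a COPY tensor iff it occurs in at least two clauses *)
Definition has_copy (v : 'I_n) : bool := 1 < occ v.

(* Potential tensor vertices: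
     inl (inl v) : the <0|+<1| tensor on the wire of variable v,
     inl (inr v) : the COPY tensor of variable v (present iff has_copy v),
     inr j       : the tensor of clause j. *)
Definition tn_vertex := ('I_n + 'I_n + 'I_m)%type.

Definition tn_V : {set tn_vertex} :=
  [set x : tn_vertex | match x with
                       | inl (inl _) => true
                       | inl (inr v) => has_copy v
                       | inr _ => true end].

Definition tn_wire (x y : tn_vertex) : bool :=
  match x, y with
  | inl (inl v), inl (inr w) => (v == w) && has_copy v
  | inl (inl v), inr j => (occ v == 1) && occurs v j       (* var wired directly *)
  | inl (inr v), inr j => has_copy v && occurs v j
  | _, _ => false
  end.

Definition tn_E : rel tn_vertex := fun x y => tn_wire x y || tn_wire y x.

Definition n_copy : nat := #|[set v | has_copy v]|.

End Network.

From mathcomp Require Import all_boot all_order.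
From mathcomp Require Import zify.
Set Implicit Arguments. Unset Strict Implicit. Unset Printing Implicit Defensive.

(* Every variable wire has exactly one neighbour (its COPY-tensor or its unique
   clause) or none, and every other edge joins a COPY-tensor to a clause.  So
   take a root bag holding all c COPY-tensors, a child bag {clause} + COPY for
   each clause, and a bag {wire, neighbour} for each wire, attached to the bag
   of its clause if it is wired directly and to the root otherwise.  All bags
   have at most c + 1 vertices; the wire bags need c >= 1 for that. *)

Lemma connect_homo (A B : finType) (e : rel A) (e' : rel B) (g : A -> B) :
  {homo g : x y / e x y >-> e' x y} ->
  forall a b, connect e a b -> connect e' (g a) (g b).
Proof.
move=> g_homo a _ /connectP[p e_p ->]; apply/connectP.
exists (map g p); first by apply: (homo_path g_homo).
by rewrite last_map.
Qed.

Section DecompositionOn.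
Variables (T K : finType) (V : {set T}) (E : rel T).

Definition tree_on (t : rel K) : Prop :=
  [/\ irreflexive t, symmetric t, (forall a b, connect t a b)
    & #|[set p : K * K | t p.1 p.2]| = 2 * #|K|.-1].

Definition tree_decomp_on (t : rel K) (B : K -> {set T}) : Prop :=
  [/\ tree_on t,
      (forall a, B a \subset V),
      (forall x, x \in V -> exists a, x \in B a),
      (forall x y, x \in V -> y \in V -> E x y -> exists a, (x \in B a) && (y \in B a))
    & (forall x a b, x \in B a -> x \in B b ->
         connect [rel c d | [&& t c d, x \in B c & x \in B d]] a b)].

Lemma treewidth_le_of_decomp_on (t : rel K) (B : K -> {set T}) (k : nat) :
  0 < #|K| -> tree_decomp_on t B -> (forall a, #|B a| <= k.+1) ->
  treewidth_le V E k.
Proof.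
move=> K_gt0 [[t_irr t_sym t_conn t_card] B_sub B_cover B_edge B_run] B_size.
set N := #|K|.-1; have cardK : #|K| = N.+1 by rewrite prednK.
pose h (i : 'I_N.+1) : K := enum_val (cast_ord (esym cardK) i).
pose g (a : K) : 'I_N.+1 := cast_ord cardK (enum_rank a).
have gK : cancel g h by move=> a; rewrite /h /g cast_ordK enum_rankK.
have hK : cancel h g by move=> i; rewrite /h /g enum_valK cast_ordKV.
have relabel (s : rel K) a b :
    connect s a b -> connect [rel i j | s (h i) (h j)] (g a) (g b).
  by apply: connect_homo => c d /=; rewrite !gK.
exists N, [rel i j | t (h i) (h j)], (fun i => B (h i)); split; last first.
  have: \max_(i : 'I_N.+1) #|B (h i)| <= k.+1.
    by apply/bigmax_leqP => i _; apply: B_size.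
  by rewrite /tw_width; lia.
split.
- split=> [i | i j | i j |] /=.
  + exact: t_irr.
  + exact: t_sym.
  + by rewrite -(hK i) -(hK j); apply: relabel.
  have gg_inj : injective (fun q : K * K => (g q.1, g q.2)).
    by apply: (can_inj (g := fun q => (h q.1, h q.2))) => -[a b] /=; rewrite !gK.
  rewrite -t_card -(card_imset _ gg_inj); apply: eq_card => -[i j].
  rewrite inE /=; apply/idP/imsetP => [tij|[[a b]]].
    by exists (h i, h j); rewrite ?inE ?hK.
  by rewrite inE => tab [-> ->]; rewrite !gK.
- by move=> i; apply: B_sub.
- by move=> x /B_cover[a xa]; exists (g a); rewrite /= gK.
- by move=> x y xV yV /(B_edge _ _ xV yV)[a xya]; exists (g a); rewrite /= gK.
- move=> x i j xi xj; rewrite -(hK i) -(hK j).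
  by have := relabel _ _ _ (B_run x _ _ xi xj); rewrite !hK.
Qed.

End DecompositionOn.

Section ParentTree.
Variables (K : finType) (p : K -> K) (z : K).
Hypotheses (p_root : p z = z) (p_reach : forall a, exists k, iter k p a = z).

Definition parent_rel : rel K :=
  fun a b => (a != z) && (b == p a) || (b != z) && (a == p b).

Lemma parent_rel_sym : symmetric parent_rel.
Proof. by move=> a b; rewrite /parent_rel orbC. Qed.

Lemma parent2_root a : p (p a) = a -> a = z.
Proof.
move=> ppa; have [k pka] := p_reach a.
have iter_even j : iter j.*2 p a = a.
  by elim: j => //= j IHj; rewrite IHj.
by rewrite -(iter_even k) -addnn iterD pka iter_fix.
Qed.

Lemma parent_neq a : a != z -> p a != a.
Proof. by apply: contra => /eqP pa; apply/eqP/parent2_root; rewrite !pa. Qed.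

Lemma parent_rel_root a : connect parent_rel a z.
Proof.
have [k <-] := p_reach a; elim: k a => [|k IHk] a; first exact: connect0.
rewrite iterSr; have [->|az] := eqVneq a z; first by rewrite p_root.
apply: connect_trans (IHk (p a)); apply: connect1.
by rewrite /parent_rel az eqxx.
Qed.

Lemma parent_rel_tree : tree_on parent_rel.
Proof.
split=> [a | | a b |].
- rewrite /parent_rel orbb; apply/negP => /andP[az /eqP pa].
  by move: (parent_neq az); rewrite -pa eqxx.
- exact: parent_rel_sym.
- apply: connect_trans (parent_rel_root a) _.
  by rewrite (sym_connect_sym parent_rel_sym) parent_rel_root.
- pose up := [set (a, p a) | a in [set~ z]].
  pose down := [set (p a, a) | a in [set~ z]].
  have -> : [set q : K * K | parent_rel q.1 q.2] = up :|: down.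
    apply/setP => -[a b]; rewrite !inE /parent_rel /=; apply/idP/orP.
      by case/orP => /andP[nz /eqP ->]; [left | right]; apply/imsetP;
        [exists a | exists b]; rewrite ?inE.
    by case=> /imsetP[c]; rewrite !inE => cz [-> ->]; rewrite cz eqxx ?orbT.
  have up_down : up :&: down = set0.
    apply/setP => -[a b]; rewrite !inE.
    apply/negP => /andP[/imsetP[c _ [-> ->]] /imsetP[d]].
    rewrite !inE => dz [pcd cpd].
    by move/eqP: dz; apply; apply: parent2_root; rewrite -pcd cpd.
  rewrite cardsU up_down cards0 subn0.
  rewrite !card_imset ?cardsC1; first lia.
    by move=> a b [].
  by move=> a b [].
Qed.

End ParentTree.

Section Network.
Variables (n m : nat) (f : cnf n m).
Local Notation vertex := (tn_vertex n m).

Definition sole_clause (v : 'I_n) : option 'I_m :=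
  if occ f v == 1 then [pick j | occurs f v j] else None.

Lemma sole_clauseP v j : occ f v == 1 -> occurs f v j -> sole_clause v = Some j.
Proof.
rewrite /sole_clause /occ => occ1 vj; rewrite occ1.
move/cards1P: occ1 => [j0 occ_j0].
case: pickP => [j' vj' | no_occ]; last by rewrite no_occ in vj.
have: j \in [set j | occurs f v j] by rewrite inE.
have: j' \in [set j | occurs f v j] by rewrite inE.
by rewrite occ_j0 !inE => /eqP -> /eqP ->.
Qed.

Lemma sole_clause_copy v : has_copy f v -> sole_clause v = None.
Proof. by rewrite /has_copy /sole_clause; case: eqP => // ->. Qed.

Definition node := option ('I_n + 'I_m).

Definition node_parent (a : node) : node :=
  if a is Some (inl v) then omap inr (sole_clause v) else None.

Lemma node_parent2 a : node_parent (node_parent a) = None.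
Proof. by case: a => [[v|j]|] //=; case: sole_clause. Qed.

Definition copies : {set vertex} :=
  [set x : vertex | if x is inl (inr v) then has_copy f v else false].

Lemma card_copies : #|copies| = n_copy f.
Proof.
have -> : copies = [set (inl (inr v) : vertex) | v in [set v | has_copy f v]].
  apply/setP => x; rewrite inE; apply/idP/imsetP => [|[v]].
    by case: x => [[v|v]|j] // cv; exists v; rewrite ?inE.
  by rewrite inE => cv ->.
by apply: card_imset => v w [].
Qed.

Definition wire_bag (v : 'I_n) : {set vertex} :=
  inl (inl v) |: if has_copy f v then [set inl (inr v)]
                 else if sole_clause v is Some j then [set inr j] else set0.

Definition bag (a : node) : {set vertex} :=
  match a with
  | None => copies
  | Some (inl v) => wire_bag v
  | Some (inr j) => inr j |: copies
  end.

Lemma card_bag a : 0 < n_copy f -> #|bag a| <= (n_copy f).+1.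
Proof.
move=> copy_gt0; case: a => [[v|j]|] /=; last by rewrite card_copies.
- rewrite /wire_bag cardsU1; apply: (@leq_trans 2); last lia.
  rewrite -[2]/(1 + 1); apply: leq_add; first by case: (_ \notin _).
  by case: has_copy; [|case: sole_clause => [j|]]; rewrite ?cards1 ?cards0.
- by rewrite cardsU1 card_copies; case: (_ \notin _).
Qed.

Lemma bag_sub a : bag a \subset tn_V f.
Proof.
have copiesV : copies \subset tn_V f by apply/subsetP => -[[v|v]|j]; rewrite !inE.
case: a => [[v|j]|] //=; last by rewrite subUset sub1set copiesV inE.
apply/subsetP => x; rewrite !inE; case/orP => [/eqP -> //|].
case cv: (has_copy f v); first by move/set1P ->.
by case: sole_clause => [j|]; rewrite ?inE // => /eqP ->.
Qed.

Lemma bag_cover x : x \in tn_V f -> exists a, x \in bag a.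
Proof.
case: x => [[v|v]|j] xV.
- by exists (Some (inl v)); rewrite /= /wire_bag setU11.
- by exists None; rewrite /= inE; rewrite inE in xV.
- by exists (Some (inr j)); rewrite /= setU11.
Qed.

Lemma bag_wire x y : tn_wire f x y -> exists a, (x \in bag a) && (y \in bag a).
Proof.
case: x => [[v|v]|j]; case: y => [[w|w]|k] //=.
- move=> /andP[/eqP <- cv]; exists (Some (inl v)).
  by rewrite /= /wire_bag setU11 cv !inE eqxx orbT.
- move=> /andP[occ1 vk]; exists (Some (inl v)).
  have no_copy : has_copy f v = false by rewrite /has_copy (eqP occ1).
  rewrite /= /wire_bag setU11 no_copy (sole_clauseP occ1 vk).
  by rewrite !inE eqxx orbT.
- move=> /andP[cv _]; exists (Some (inr k)).
  by rewrite /= setU11 !inE cv orbT.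
Qed.

Lemma bag_edge x y : x \in tn_V f -> y \in tn_V f -> tn_E f x y ->
  exists a, (x \in bag a) && (y \in bag a).
Proof.
move=> _ _ /orP[/bag_wire // | /bag_wire[a xya]].
by exists a; rewrite andbC.
Qed.

Local Notation tree := (parent_rel node_parent None).
Local Notation tree_at x := [rel a b | [&& tree a b, x \in bag a & x \in bag b]].

Definition hub (x : vertex) : node :=
  match x with
  | inl (inl v) => Some (inl v)
  | inl (inr _) => None
  | inr j => Some (inr j)
  end.

Lemma connect_hub x a : x \in bag a -> connect (tree_at x) a (hub x).
Proof.
case: x => [[v|v]|j]; case: a => [[w|k]|] /=; rewrite ?inE /= ?orbF //.
- case/orP => [/eqP[->] |]; first exact: connect0.
  by case: has_copy; [|case: sole_clause => [j|]]; rewrite inE.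
- case cw: (has_copy f w); last by case: sole_clause => [j|]; rewrite inE.
  rewrite inE => /eqP[->]; apply: connect1.
  by rewrite /= /parent_rel /= (sole_clause_copy cw) /wire_bag !inE cw set11 orbT.
- by move=> cv; apply: connect1; rewrite /= /parent_rel /= !inE cv.
- case cw: (has_copy f w); first by rewrite inE.
  case wk: sole_clause => [k|]; rewrite inE // => /eqP[->]; apply: connect1.
  by rewrite /= /parent_rel /= wk /wire_bag cw wk !inE !eqxx !orbT.
- by move=> /eqP[->]; exact: connect0.
Qed.

Lemma bag_tree_decomp : tree_decomp_on (tn_V f) (tn_E f) tree bag.
Proof.
split.
- by apply: parent_rel_tree => // a; exists 2; apply: node_parent2.
- exact: bag_sub.
- exact: bag_cover.
- exact: bag_edge.
move=> x a b xa xb; apply: connect_trans (connect_hub xa) _.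
have tree_at_sym : symmetric (tree_at x).
  by move=> c d /=; rewrite parent_rel_sym (andbC (x \in bag c)).
by rewrite (sym_connect_sym tree_at_sym) connect_hub.
Qed.

End Network.

Theorem proposition2 (n m : nat) (f : cnf n m) :
  0 < n_copy f ->
  treewidth_le (tn_V f) (tn_E f) (n_copy f).
Proof.
move=> copy_gt0; apply: (treewidth_le_of_decomp_on _ (bag_tree_decomp f)).
- by rewrite card_option.
- by move=> a; apply: card_bag.
Qed.
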